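(* Let $c_1 > 0$ be a real number, let $k \ge 2$ be an integer, and let $G$ be a finite simple graph with $\mathrm{mad}(G) < c_1 + k$. Then there exists a partition $V(G) = A \uplus B$ such that $\mathrm{mad}(G[A]) < c_1$ and $\mathrm{mad}(G[B]) < 2k - 2$.
   Context: $\mathrm{mad}(G) := \max_{H \subseteq G,\, V(H)\neq\emptyset} \frac{2|E(H)|}{|V(H)|}$ (maximum average degree over nonempty subgraphs); by convention the graph with empty vertex set has $\mathrm{mad} = -\infty$. *)

From HB Require Import structures.
From mathcomp Require Import all_boot all_order all_algebra.
Set Implicit Arguments. Unset Strict Implicit. Unset Printing Implicit Defensive.
Import Order.TTheory GRing.Theory Num.Theory.

(* A finite simple graph is a symmetric irreflexive relation e on a finType T.
   Edges are unordered pairs {x,y} (2-element sets). *)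
Definition simple_graph (T : finType) (e : rel T) : Prop :=
  symmetric e /\ irreflexive e.

Definition edges_in (T : finType) (e : rel T) (S : {set T}) : {set {set T}} :=
  [set E : {set T} | [exists x in S, exists y in S, e x y && (E == [set x; y])]].

Definition subgraph_of (T : finType) (e : rel T) (D S : {set T})
  (F : {set {set T}}) : bool :=
  (S \subset D) && (F \subset edges_in e S).

(* mad(G[D]) < c, i.e. max over nonempty subgraphs H of G[D] of
   2|E(H)|/|V(H)| is < c (vacuous when D is empty: mad = -infinity). *)
Definition mad_lt (R : realFieldType) (T : finType) (e : rel T)
  (D : {set T}) (c : R) : Prop :=
  forall (S : {set T}) (F : {set {set T}}),
    subgraph_of e D S F -> S != set0 ->
    ((2 * #|F|)%:R / (#|S|)%:R < c)%R.

(* Let S0 be a densest subgraph, so that mad(G) = d0 / n0 with d0 = 2|E(S0)| and n0 = |S0|.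
   By Hakimi's theorem every edge, given weight 2 n0, can be split between its two ends so
   that each vertex receives at most d0: the obstruction would be a set S with more weight
   than 2 d0 |S|, i.e. denser than S0.  Shifting one unit of weight around cycles of "light"
   arcs, we may moreover assume that every nonempty vertex set contains a vertex owning at
   least half of each of its edges inside the set.  Peeling such vertices one at a time, put
   a vertex into B if it has fewer than k neighbours already in B, and into A otherwise.
   Then B is (k-1)-degenerate, so mad(G[B]) < 2k - 2, while every vertex of A spends at
   least k n0 of its budget d0 on edges towards B, which leaves G[A] with density at most
   d0 / n0 - k < c1. *)

From HB Require Import structures.
From mathcomp Require Import all_boot all_order all_algebra.
From mathcomp Require Import zify lra.
Set Implicit Arguments. Unset Strict Implicit. Unset Printing Implicit Defensive.
Import Order.TTheory GRing.Theory Num.Theory.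

Section PairSums.
Variable T : finType.
Implicit Types (g : T -> T -> nat) (c : T -> nat) (X S : {set T}).

Definition pair_sum g X := \sum_(a in X) \sum_(b in X) g a b.

Definition symmetric_weight g := forall a b, g a b = g b a.
Definition loopless g := forall a, g a a = 0.

Lemma pair_sum0 g : pair_sum g set0 = 0.
Proof. by rewrite /pair_sum big_set0. Qed.

Lemma pair_sum_mkcond g X :
  pair_sum g X = \sum_a \sum_b ((a \in X) * (b \in X) * g a b).
Proof.
rewrite /pair_sum big_mkcond; apply: eq_bigr => a _ /=.
rewrite big_mkcond /=; case: (a \in X) => /=; last by rewrite big1.
by apply: eq_bigr => b _; case: (b \in X); rewrite ?mul1n ?mul0n.
Qed.

Lemma sum_mkcond c X : \sum_(a in X) c a = \sum_a ((a \in X) * c a).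
Proof.
by rewrite big_mkcond; apply: eq_bigr => a _; case: (a \in X); rewrite ?mul1n ?mul0n.
Qed.

Lemma pair_sumD g g' S :
  pair_sum (fun a b => g a b + g' a b) S = pair_sum g S + pair_sum g' S.
Proof. by rewrite /pair_sum -big_split; apply: eq_bigr => a _; rewrite big_split. Qed.

Lemma pair_sumD1 g X v : symmetric_weight g -> g v v = 0 -> v \in X ->
  pair_sum g X = pair_sum g (X :\ v) + 2 * \sum_(b in X :\ v) g v b.
Proof.
move=> g_sym g_vv vX; rewrite /pair_sum.
rewrite (eq_bigr (fun a => g a v + \sum_(b in X :\ v) g a b)); last first.
  by move=> a _; rewrite (big_setD1 v vX).
rewrite (big_setD1 v vX) /= g_vv add0n big_split /=.
under [\sum_(a in X :\ v) g a v]eq_bigr do rewrite g_sym.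
lia.
Qed.

Lemma pair_sum_even g X : symmetric_weight g -> loopless g -> ~~ odd (pair_sum g X).
Proof.
move=> g_sym g_loop; have [n] := ubnP #|X|; elim: n X => // n IH X cardX.
case: (set_0Vmem X) => [->|[v vX]]; first by rewrite pair_sum0.
rewrite (pair_sumD1 g_sym (g_loop v) vX) oddD mul2n odd_double addbF.
by apply: IH; move: cardX; rewrite (cardsD1 v X) vX.
Qed.

Lemma pair_sum_setU_setI g S S' :
  pair_sum g (S :|: S') + pair_sum g (S :&: S') =
  pair_sum g S + pair_sum g S'
  + \sum_a \sum_b ((a \in S :\: S') * (b \in S' :\: S) * g a b)
  + \sum_a \sum_b ((a \in S' :\: S) * (b \in S :\: S') * g a b).
Proof.
rewrite !pair_sum_mkcond -!big_split; apply: eq_bigr => a _ /=.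
rewrite -!big_split; apply: eq_bigr => b _ /=; rewrite !inE.
by case: (a \in S); case: (a \in S'); case: (b \in S); case: (b \in S') => /=; lia.
Qed.

Lemma sum_setU_setI c S S' :
  \sum_(a in S :|: S') c a + \sum_(a in S :&: S') c a =
  \sum_(a in S) c a + \sum_(a in S') c a.
Proof.
rewrite !sum_mkcond -!big_split; apply: eq_bigr => a _ /=; rewrite !inE.
by case: (a \in S); case: (a \in S') => /=; lia.
Qed.

Lemma leq_double_sum_entry g u v : g u v <= \sum_a \sum_b g a b.
Proof. by rewrite (bigD1 u) //= (bigD1 v) //=; lia. Qed.

Lemma ltn_double_sum g g' u v : (forall a b, g a b <= g' a b) -> g u v < g' u v ->
  \sum_a \sum_b g a b < \sum_a \sum_b g' a b.
Proof.
move=> le_gg' lt_uv; rewrite (bigD1 u) //= [X in _ < X](bigD1 u) //=.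
rewrite (bigD1 v) //= [X in _ < X + _](bigD1 v) //=.
have le_u : \sum_(b | b != v) g u b <= \sum_(b | b != v) g' u b by apply: leq_sum.
have le_rest : \sum_(a | a != u) \sum_b g a b <= \sum_(a | a != u) \sum_b g' a b.
  by apply: leq_sum => a _; apply: leq_sum.
lia.
Qed.

Lemma sum_eq_pred1 (S : {set T}) u : \sum_(a in S) (a == u) = (u \in S).
Proof.
rewrite big_mkcond (bigD1 u) //= eqxx big1 ?addn0 => [|a /negbTE->]; last by case: ifP.
by case: (u \in S).
Qed.

Lemma leq_sum_subset (A B : {set T}) (F : T -> nat) :
  A \subset B -> \sum_(i in A) F i <= \sum_(i in B) F i.
Proof. by move=> AB; apply: sub_le_big => // [x y|i /(subsetP AB)]; first exact: leq_addr. Qed.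

Lemma sum_disjoint_le (A B : {set T}) (F : T -> nat) :
  [disjoint A & B] -> \sum_(i in A) F i + \sum_(i in B) F i <= \sum_i F i.
Proof.
move=> disjAB; rewrite -bigU // [X in X <= _]big_mkcond /=.
by apply: leq_sum => i _; case: (_ \in _).
Qed.

End PairSums.

Section Hakimi.
Variable T : finType.
Implicit Types (m y : T -> T -> nat) (c : T -> nat) (S : {set T}).

Definition hakimi_cond m c := forall S, pair_sum m S <= 2 * \sum_(a in S) c a.
Definition tight m c S := pair_sum m S == 2 * \sum_(a in S) c a.
Definition orients m y := forall a b, y a b + y b a = m a b.
Definition outdeg_le y c := forall a, \sum_b y a b <= c a.

Definition arc (u v a b : T) : nat := (a == u) && (b == v).
Definition remove_edge m u v a b := m a b - arc u v a b - arc v u a b.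

Lemma sum_arc u v a : \sum_b arc u v a b = (a == u).
Proof.
rewrite /arc; case: (a == u) => /=; last by rewrite big1.
by rewrite (bigD1 v) //= eqxx big1 // => b /negbTE->.
Qed.

Lemma pair_sum_arc u v S : pair_sum (arc u v) S = (u \in S) && (v \in S).
Proof.
rewrite /pair_sum (eq_bigr (fun a => (a == u) * (v \in S))); last first.
  by move=> a _; rewrite /arc; case: (a == u); rewrite /= ?sum_eq_pred1 ?mul1n // big1.
by rewrite -big_distrl sum_eq_pred1 /=; case: (u \in S); case: (v \in S).
Qed.

Lemma pair_sum_orients m y S : orients m y -> 2 * pair_sum y S = pair_sum m S.
Proof.
move=> orient_y; rewrite /pair_sum mul2n -addnn {2}exchange_big -big_split.
by apply: eq_bigr => a _; rewrite -big_split; apply: eq_bigr => b _; exact: orient_y.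
Qed.

Section RemoveEdge.
Variables (m : T -> T -> nat) (u v : T).
Hypotheses (m_sym : symmetric_weight m) (m_loop : loopless m) (m_uv : 0 < m u v).

Lemma neq_edge : u != v.
Proof. by apply: contraTneq m_uv => ->; rewrite m_loop. Qed.

Lemma remove_edgeK a b :
  m a b = remove_edge m u v a b + arc u v a b + arc v u a b.
Proof.
suff : arc u v a b + arc v u a b <= m a b by rewrite /remove_edge; lia.
rewrite /arc; case/boolP: ((a == u) && (b == v)) => [/andP[/eqP-> /eqP->]|nuv].
  by rewrite (negbTE neq_edge).
case/boolP: ((a == v) && (b == u)) => [/andP[/eqP-> /eqP->]|//].
by rewrite m_sym.
Qed.

Lemma remove_edge_sym : symmetric_weight (remove_edge m u v).
Proof.
by move=> a b; rewrite /remove_edge /arc m_sym [(b == u) && _]andbC [(b == v) && _]andbC subnAC.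
Qed.

Lemma remove_edge_loopless : loopless (remove_edge m u v).
Proof. by move=> a; rewrite /remove_edge m_loop. Qed.

Lemma remove_edge_lt :
  \sum_a \sum_b remove_edge m u v a b < \sum_a \sum_b m a b.
Proof.
apply: (ltn_double_sum (u := u) (v := v)) => [a b|]; rewrite [m _ _]remove_edgeK; first lia.
by rewrite /arc !eqxx; lia.
Qed.

Lemma pair_sum_remove_edge S :
  pair_sum m S = pair_sum (remove_edge m u v) S + 2 * ((u \in S) && (v \in S)).
Proof.
have -> : pair_sum m S =
    pair_sum (fun a b => remove_edge m u v a b + arc u v a b + arc v u a b) S.
  by apply: eq_bigr => a _; apply: eq_bigr => b _; exact: remove_edgeK.
rewrite !pair_sumD !pair_sum_arc [(v \in S) && _]andbC; lia.
Qed.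

Variable c : T -> nat.
Hypothesis untight : forall S, u \in S -> v \notin S -> ~~ tight m c S.

Lemma untight_capacity_pos : 0 < c u.
Proof.
have := untight (S := [set u]); rewrite set11 inE eq_sym neq_edge => /(_ isT isT).
by rewrite /tight /pair_sum !big_set1 m_loop; case: (c u).
Qed.

Lemma hakimi_cond_remove_edge : hakimi_cond m c ->
  hakimi_cond (remove_edge m u v) (fun a => c a - (a == u)).
Proof.
move=> hm S; have c_u := untight_capacity_pos.
have sum_c : \sum_(a in S) (c a - (a == u)) + (u \in S) = \sum_(a in S) c a.
  rewrite -sum_eq_pred1 -big_split; apply: eq_bigr => a _ /=.
  by case: (eqVneq a u) => [->|] /=; lia.
have := hm S; rewrite (pair_sum_remove_edge S) -sum_c.
case uS: (u \in S); case vS: (v \in S) => /=; try lia.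
have := untight uS (negbT vS); rewrite /tight (pair_sum_remove_edge S) uS vS -sum_c /=.
(* [S] separates [u] from [v] and is not tight, so by parity it has slack at least 2. *)
have := odd_double_half (pair_sum (remove_edge m u v) S).
rewrite (negbTE (pair_sum_even S remove_edge_sym remove_edge_loopless)) -mul2n.
lia.
Qed.

End RemoveEdge.

Lemma untight_orientation m c u v : hakimi_cond m c -> 0 < m u v ->
  (forall S, u \in S -> v \notin S -> ~~ tight m c S) \/
  (forall S, v \in S -> u \notin S -> ~~ tight m c S).
Proof.
move=> hm m_uv.
case: (boolP [exists S : {set T}, [&& u \in S, v \notin S & tight m c S]]); last first.
  by move/existsPn=> none; left=> S uS vS; have := none S; rewrite uS vS.
case/existsP=> S /and3P[uS vS /eqP tS]; right=> S' vS' uS'; apply/negP=> /eqP tS'.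
have cross : m u v <= \sum_a \sum_b ((a \in S :\: S') * (b \in S' :\: S) * m a b).
  by apply: leq_trans (leq_double_sum_entry _ u v); rewrite !inE uS vS' (negbTE vS) uS' /= !mul1n.
have := pair_sum_setU_setI m S S'; have := sum_setU_setI c S S'.
have := hm (S :|: S'); have := hm (S :&: S'); lia.
Qed.

Theorem hakimi m c : symmetric_weight m -> loopless m -> hakimi_cond m c ->
  exists2 y, orients m y & outdeg_le y c.
Proof.
have [n] := ubnP (\sum_a \sum_b m a b).
elim: n m c => // n IH m c total_lt m_sym m_loop hm.
case: (boolP [exists u, exists v, 0 < m u v]); last first.
  move/existsPn=> m0; exists (fun _ _ => 0) => [a b|a]; last by rewrite big1.
  by have /existsPn/(_ b) := m0 a; lia.
case/existsP=> u /existsP[v m_uv].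
wlog untight : u v m_uv / forall S, u \in S -> v \notin S -> ~~ tight m c S.
  move=> wlog_uv; case: (untight_orientation hm m_uv); first exact: wlog_uv.
  by apply: wlog_uv; rewrite m_sym.
have [y orient_y outdeg_y] := IH _ _
  (leq_trans (remove_edge_lt m_sym m_loop m_uv) total_lt)
  (remove_edge_sym u v m_sym) (remove_edge_loopless u v m_loop)
  (hakimi_cond_remove_edge m_sym m_loop m_uv untight hm).
exists (fun a b => y a b + arc u v a b) => [a b|a].
  by rewrite [m a b](remove_edgeK m_sym m_loop m_uv) -orient_y /arc [(b == u) && _]andbC; lia.
have := outdeg_y a; have := untight_capacity_pos m_loop m_uv untight.
by rewrite big_split sum_arc /=; case: (eqVneq a u) => [->|]; lia.
Qed.

End Hakimi.

Lemma exists_imset_fixed (T : finType) (s : T -> T) (X : {set T}) :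
  X != set0 -> s @: X \subset X -> exists C : {set T}, [/\ C \subset X, C != set0 & s @: C = C].
Proof.
move=> X_neq0 sX.
pose closed (C : {set T}) := [&& C \subset X, C != set0 & s @: C \subset C].
have closedX : closed X by rewrite /closed subxx X_neq0.
case: (arg_minnP (fun C : {set T} => #|C|) closedX) => C /and3P[CX C_neq0 sC] C_min.
exists C; split=> //; apply/eqP; rewrite eqEcard sC /=; apply: C_min.
by rewrite /closed (subset_trans sC CX) imset_eq0 C_neq0 imsetS.
Qed.

Section HalfOrientation.
Variables (T : finType) (e : rel T) (h : nat).
Implicit Types (y : T -> T -> nat) (c : T -> nat).

Definition edge_weight (w : nat) (a b : T) : nat := w * e a b.

Definition half_owner y v u := h <= y v u.

(* I.e. the digraph of light arcs [v -> u] (edges of which [v] owns less than half)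
   is acyclic. *)
Definition peelable y := [forall X : {set T}, (X != set0) ==>
  [exists v in X, [forall u in X, e v u ==> half_owner y v u]]].

Definition excess y := \sum_a \sum_b (y a b - h).

Section Rotation.
Variables (y : T -> T -> nat) (s : T -> T) (C : {set T}).
Hypotheses (orient_y : orients (edge_weight h.*2) y) (sC : s @: C = C).
Hypothesis light : forall a, a \in C -> e a (s a) && (y a (s a) < h).

Definition forward a b := (a \in C) && (b == s a).
Definition rotate a b := y a b + forward a b - forward b a.

Lemma forward_light a b : forward a b -> y a b < h.
Proof. by case/andP=> aC /eqP->; case/andP: (light aC). Qed.

Lemma backward_heavy a b : forward b a -> h < y a b.
Proof.
case/andP=> bC /eqP->; case/andP: (light bC) => e_bsb lt_h.
by have := orient_y b (s b); rewrite /edge_weight e_bsb; lia.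
Qed.

Lemma sum_forward a : \sum_b (forward a b : nat) = (a \in C).
Proof.
rewrite /forward; case: (a \in C) => /=; last by rewrite big1.
by rewrite (bigD1 (s a)) //= eqxx big1 // => b /negbTE->.
Qed.

Lemma sum_backward a : \sum_b (forward b a : nat) = (a \in C).
Proof.
have s_inj : {in C &, injective s} by apply/imset_injP; rewrite sC.
case aC: (a \in C); last first.
  rewrite big1 // => b _; rewrite /forward.
  case: (boolP (b \in C)) => //= bC; case: eqP => // aE.
  by move: aC; rewrite aE -sC imset_f.
have /imsetP[b bC ->] : a \in s @: C by rewrite sC.
rewrite (bigD1 b) //= /forward bC eqxx big1 // => b' b'b.
case: (boolP (b' \in C)) => //= b'C; case: eqP => // /esym sb'b.
by move: b'b; rewrite (s_inj _ _ b'C bC sb'b) eqxx.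
Qed.

Lemma rotateK a b : rotate a b + forward b a = y a b + forward a b.
Proof.
rewrite /rotate; case: (boolP (forward b a)) => [/backward_heavy|_] /=; lia.
Qed.

Lemma rotate_orients : orients (edge_weight h.*2) rotate.
Proof. by move=> a b; rewrite -orient_y; have := rotateK a b; have := rotateK b a; lia. Qed.

Lemma rotate_outdeg a : \sum_b rotate a b = \sum_b y a b.
Proof.
apply/eqP; rewrite -(eqn_add2r (a \in C)) -{1}sum_backward -sum_forward -!big_split.
by apply/eqP/eq_bigr => b _; exact: rotateK.
Qed.

(* Backward arcs are heavy, so each loses one unit of excess; forward arcs stay at most [h]. *)
Lemma rotate_excess : C != set0 -> excess rotate < excess y.
Proof.
case/set0Pn=> v vC; apply: (ltn_double_sum (u := s v) (v := v)) => [a b|].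
  have := rotateK a b; case: (boolP (forward a b)) => [/forward_light|_] /=; lia.
have back : forward v (s v) by rewrite /forward vC eqxx.
have := rotateK (s v) v; have := backward_heavy back; rewrite back.
by case: (boolP (forward (s v) v)) => [/forward_light|_] /=; lia.
Qed.

End Rotation.

Lemma peelable_orientation y c :
  orients (edge_weight h.*2) y -> outdeg_le y c ->
  exists y', [/\ orients (edge_weight h.*2) y', outdeg_le y' c & peelable y'].
Proof.
have [n] := ubnP (excess y); elim: n y => // n IH y excess_lt orient_y outdeg_y.
case: (boolP (peelable y)) => [|/forallPn[X]]; first by exists y.
rewrite negb_imply => /andP[X_neq0 /exists_inPn no_owner].
have light v : v \in X -> exists u, (u \in X) && (e v u && (y v u < h)).
  move=> vX; have /forall_inPn[u uX] := no_owner v vX.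
  by rewrite negb_imply -ltnNge => e_lt; exists u; rewrite uX.
pose s v := odflt v [pick u in X | e v u && (y v u < h)].
have s_light v : v \in X -> (s v \in X) && (e v (s v) && (y v (s v) < h)).
  by move=> /light[u]; rewrite /s; case: pickP => [?|/(_ u)->].
have [C [CX C_neq0 sC]] : exists C : {set T}, [/\ C \subset X, C != set0 & s @: C = C].
  apply: exists_imset_fixed X_neq0 _; apply/subsetP=> _ /imsetP[v vX ->].
  by case/andP: (s_light v vX).
have light_C a : a \in C -> e a (s a) && (y a (s a) < h).
  by move=> aC; case/andP: (s_light a (subsetP CX a aC)).
apply: (IH (rotate y s C)).
- by have := rotate_excess orient_y light_C C_neq0; lia.
- exact: rotate_orients.
- by move=> a; rewrite rotate_outdeg.
Qed.

End HalfOrientation.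

Lemma set2_eq (T : finType) (a b x y : T) : [set a; b] = [set x; y] ->
  (a, b) = (x, y) \/ (a, b) = (y, x).
Proof.
move=> E; have /set2P[] : a \in [set x; y] by rewrite -E set21.
all: have /set2P[] : b \in [set x; y] by rewrite -E set22.
all: have /set2P[] : x \in [set a; b] by rewrite E set21.
all: have /set2P[] : y \in [set a; b] by rewrite E set22.
all: move=> *; subst; by [left | right].
Qed.

Section Density.
Variables (T : finType) (e : rel T).
Hypotheses (e_sym : symmetric e) (e_irr : irreflexive e).

Definition deg_sum (S : {set T}) := pair_sum (fun a b => nat_of_bool (e a b)) S.

Lemma deg_sumD1 (S : {set T}) v : v \in S ->
  deg_sum S = deg_sum (S :\ v) + 2 * \sum_(b in S :\ v) e v b.
Proof. by apply: pair_sumD1 => [a b|]; rewrite ?e_irr // [e a b]e_sym. Qed.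

Lemma edges_in_card (S : {set T}) : 2 * #|edges_in e S| = deg_sum S.
Proof.
pose P := [set p : T * T | [&& p.1 \in S, p.2 \in S & e p.1 p.2]].
pose ends (p : T * T) := [set p.1; p.2].
have -> : deg_sum S = #|P|.
  rewrite -sum1_card /deg_sum /pair_sum pair_big_dep big_mkcond [RHS]big_mkcond.
  apply: eq_bigr => -[a b] _; rewrite inE /=.
  by case: (a \in S); case: (b \in S) => //=; case: (e a b).
have -> : edges_in e S = ends @: P.
  apply/setP=> E; rewrite inE; apply/existsP/imsetP.
    case=> x /andP[xS /existsP[y /and3P[yS exy /eqP->]]].
    by exists (x, y); rewrite // inE xS yS exy.
  case=> -[x y]; rewrite inE /= => /and3P[xS yS exy] ->; exists x.
  by rewrite xS /=; apply/existsP; exists y; rewrite yS exy /ends eqxx.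
have fiber p : p \in P -> #|[set q | (q \in P) && (ends q == ends p)]| = 2.
  case: p => x y; rewrite inE => /and3P[/= xS yS exy].
  have -> : [set q | (q \in P) && (ends q == ends (x, y))] = [set (x, y); (y, x)].
    apply/setP=> -[a b]; rewrite !inE /ends /=; apply/andP/orP.
      by case=> _ /eqP/set2_eq[] [-> ->]; [left | right].
    case=> /eqP[-> ->]; first by rewrite xS yS exy.
    by rewrite yS xS e_sym exy setUC.
  rewrite cards2; suff : x != y by move=> /negbTE xy; rewrite xpair_eqE xy.
  by apply: contraTneq exy => ->; rewrite e_irr.
rewrite -[#|P|]sum1_card (partition_big_imset ends) mulnC -sum_nat_const.
by apply: eq_bigr => _ /imsetP[p pP ->]; rewrite sum1dep_card fiber.
Qed.

Lemma mad_ltP (R : realFieldType) (D : {set T}) (c : R) :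
  mad_lt e D c <->
  forall S : {set T}, S \subset D -> S != set0 -> ((deg_sum S)%:R < c * #|S|%:R)%R.
Proof.
have card_pos (S : {set T}) : S != set0 -> (0 < #|S|%:R :> R)%R by rewrite ltr0n card_gt0.
split=> [madD S SD S_neq0 | dens S F /andP[SD FS] S_neq0].
  have := madD S (edges_in e S); rewrite /subgraph_of SD subxx => /(_ isT S_neq0).
  by rewrite edges_in_card ltr_pdivrMr ?card_pos.
rewrite ltr_pdivrMr ?card_pos //; apply: le_lt_trans (dens S SD S_neq0).
by rewrite ler_nat -edges_in_card leq_mul2l subset_leq_card.
Qed.

End Density.

Section Peeling.
Variables (T : finType) (e : rel T) (h k : nat) (y : T -> T -> nat).
Hypotheses (e_sym : symmetric e) (e_irr : irreflexive e) (k_ge2 : 2 <= k).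
Hypothesis y_peelable : peelable e h y.

Definition heavy_deg (B : {set T}) a := \sum_(b in B) (e a b && half_owner h y a b).

Definition sparse (d : nat) (B : {set T}) :=
  forall S : {set T}, S \subset B -> S != set0 -> deg_sum e S < d * #|S|.

Lemma sparse_setU1 B v :
  sparse (2 * k - 2) B -> \sum_(b in B) e v b < k -> sparse (2 * k - 2) (v |: B).
Proof.
move=> sparseB deg_v S SvB S_neq0.
have SvB' : S :\ v \subset B.
  by apply/subsetP=> x /setD1P[xv /(subsetP SvB)]; rewrite !inE (negbTE xv).
case vS: (v \in S); last first.
  apply: sparseB S_neq0; apply: subset_trans SvB'; apply/subsetP=> x xS.
  by rewrite !inE xS andbT; apply: contraFneq vS => <-.
have deg_vS := leq_sum_subset (fun b => nat_of_bool (e v b)) SvB'.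
rewrite (deg_sumD1 e_sym e_irr vS) (cardsD1 v S) vS /=.
case: (eqVneq (S :\ v) set0) => [Sv0|Sv_neq0].
  by rewrite Sv0 /deg_sum pair_sum0 big_set0 cards0; lia.
by have := sparseB _ SvB' Sv_neq0; lia.
Qed.

Lemma peel_partition (X : {set T}) : exists A B : {set T},
  [/\ A :|: B = X, [disjoint A & B], {in A, forall a, k <= heavy_deg B a}
    & sparse (2 * k - 2) B].
Proof.
have [n] := ubnP #|X|; elim: n X => // n IH X cardX.
case: (eqVneq X set0) => [->|X_neq0].
  exists set0, set0; split=> [||a|S]; rewrite ?setU0 ?inE //.
    by rewrite -setI_eq0 setI0.
  by rewrite subset0 => /eqP->; rewrite eqxx.
have /existsP[v /andP[vX v_owner]] := implyP (forallP y_peelable X) X_neq0.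
have [|A [B [AB_X disjAB heavyA sparseB]]] := IH (X :\ v).
  by move: cardX; rewrite (cardsD1 v X) vX.
have [vA vB] : v \notin A /\ v \notin B.
  by apply/norP; rewrite -in_setU AB_X setD11.
case: (ltnP (\sum_(b in B) e v b) k) => deg_v.
  exists A, (v |: B); split.
  - by rewrite setUCA AB_X setD1K.
  - by rewrite -setI_eq0 setIUr setU_eq0 !setI_eq0 disjAB disjoint_sym disjoints1 vA.
  - by move=> a /heavyA; move/leq_trans; apply; apply: leq_sum_subset; apply: subsetUr.
  - exact: sparse_setU1.
exists (v |: A), B; split=> //.
- by rewrite -setUA AB_X setD1K.
- by rewrite -setI_eq0 setIUl setU_eq0 !setI_eq0 disjAB disjoints1 vB.
move=> a /setU1P[->|/heavyA //]; apply: leq_trans deg_v _; apply: leq_sum => b bB.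
have bX : b \in X by move: (setD1K vX); rewrite -AB_X => <-; rewrite !inE bB !orbT.
by case: (boolP (e v b)) => //= evb; rewrite (implyP (forall_inP v_owner b bX) evb).
Qed.

End Peeling.

Lemma exists_densest (T : finType) (e : rel T) : [set: T] != set0 ->
  exists2 S0 : {set T}, S0 != set0 &
    forall S, #|S0| * deg_sum e S <= deg_sum e S0 * #|S|.
Proof.
move=> T_neq0; pose density (S : {set T}) : rat := ((deg_sum e S)%:R / #|S|%:R)%R.
have [S0 S0_neq0 S0_max] :=
  @Order.TotalTheory.arg_maxP _ rat _ setT (fun S => S != set0) density T_neq0.
exists S0 => // S; case: (eqVneq S set0) => [->|S_neq0].
  by rewrite /deg_sum pair_sum0 muln0.
have /= := S0_max S S_neq0.
rewrite ler_pdivrMr ?ltr0n ?card_gt0 // mulrAC ler_pdivlMr ?ltr0n ?card_gt0 //.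
by rewrite -!natrM ler_nat mulnC.
Qed.

Section PartitionBounds.
Variables (T : finType) (e : rel T).
Hypotheses (e_sym : symmetric e) (e_irr : irreflexive e).

Lemma pair_sum_edge_weight w S : pair_sum (edge_weight e w) S = w * deg_sum e S.
Proof.
by rewrite /deg_sum /pair_sum big_distrr; apply: eq_bigr => a _; rewrite big_distrr.
Qed.

(* [deg_sum e S0 / #|S0|] is mad(G); giving every edge weight [2 #|S0|] turns the density
   bound into Hakimi's condition with integral capacity [deg_sum e S0]. *)
Lemma exists_peelable_orientation (S0 : {set T}) :
  (forall S, #|S0| * deg_sum e S <= deg_sum e S0 * #|S|) ->
  exists y, [/\ orients (edge_weight e (#|S0|).*2) y,
                outdeg_le y (fun=> deg_sum e S0) & peelable e #|S0| y].
Proof.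
move=> S0_densest.
have w_sym : symmetric_weight (edge_weight e (#|S0|).*2).
  by move=> a b; rewrite /edge_weight e_sym.
have w_loop : loopless (edge_weight e (#|S0|).*2).
  by move=> a; rewrite /edge_weight e_irr muln0.
have w_cond : hakimi_cond (edge_weight e (#|S0|).*2) (fun=> deg_sum e S0).
  move=> S; rewrite pair_sum_edge_weight sum_nat_const -mul2n -mulnA leq_mul2l.
  by rewrite [#|S| * _]mulnC S0_densest orbT.
have [y orient_y outdeg_y] := hakimi w_sym w_loop w_cond.
exact: peelable_orientation orient_y outdeg_y.
Qed.

Lemma heavy_deg_sum_le h y B a :
  h * heavy_deg e h y B a <= \sum_(b in B) y a b.
Proof.
rewrite /heavy_deg big_distrr; apply: leq_sum => b _.
by case: (e a b); rewrite /half_owner /= ?muln0 //; case: (leqP h (y a b)); rewrite ?muln1 ?muln0.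
Qed.

Lemma deg_sum_heavy_le h E0 k y (A B S : {set T}) :
  orients (edge_weight e h.*2) y -> outdeg_le y (fun=> E0) -> [disjoint A & B] ->
  {in A, forall a, k <= heavy_deg e h y B a} -> S \subset A ->
  h * deg_sum e S + #|S| * (h * k) <= #|S| * E0.
Proof.
move=> orient_y outdeg_y disjAB heavyA SA.
have disjSB : [disjoint S & B] by apply: disjointWl disjAB.
have sum_y : pair_sum y S = h * deg_sum e S.
  apply/eqP; rewrite -(eqn_pmul2l (isT : 0 < 2)) (pair_sum_orients _ orient_y).
  by rewrite pair_sum_edge_weight -mul2n mulnA.
rewrite -sum_y -!sum_nat_const -big_split /=; apply: leq_sum => a aS.
have := leq_mul (leqnn h) (heavyA a (subsetP SA a aS)).
have := heavy_deg_sum_le h y B a; have := sum_disjoint_le (y a) disjSB.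
have := outdeg_y a; lia.
Qed.

Lemma mad_lt_sparse (R : realFieldType) d B : sparse e d B -> mad_lt e B (d%:R : R).
Proof.
move=> sparseB; apply/(mad_ltP e_sym e_irr) => S SB S_neq0.
by rewrite -natrM ltr_nat; exact: sparseB.
Qed.

Lemma mad_lt_heavy (R : realFieldType) (c : R) h E0 k y (A B : {set T}) :
  0 < h -> (E0%:R < (c + k%:R) * h%:R)%R ->
  orients (edge_weight e h.*2) y -> outdeg_le y (fun=> E0) -> [disjoint A & B] ->
  {in A, forall a, k <= heavy_deg e h y B a} -> mad_lt e A c.
Proof.
move=> h_gt0 E0_lt orient_y outdeg_y disjAB heavyA.
apply/(mad_ltP e_sym e_irr) => S SA S_neq0.
have := deg_sum_heavy_le orient_y outdeg_y disjAB heavyA SA.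
rewrite -(ler_nat R) !natrD !natrM => bound.
have S_gt0 : (0 < #|S|%:R :> R)%R by rewrite ltr0n card_gt0.
have h_gt0' : (0 < h%:R :> R)%R by rewrite ltr0n.
nra.
Qed.

End PartitionBounds.


Theorem mainTheorem13 (R : realFieldType) (c1 : R) (k : nat)
  (T : finType) (e : rel T) :
  (0 < c1)%R -> (2 <= k)%N -> simple_graph e ->
  mad_lt e [set: T] (c1 + k%:R : R)%R ->
  exists A B : {set T},
    [/\ [disjoint A & B], A :|: B = [set: T],
        mad_lt e A c1 & mad_lt e B (2 * k%:R - 2 : R)%R].
Proof.
move=> c1_gt0 k_ge2 [e_sym e_irr] madG.
case: (eqVneq [set: T] set0) => [T0|T_neq0].
  have mad0 (c : R) : mad_lt e set0 c.
    by move=> S F /andP[]; rewrite subset0 => /eqP-> _; rewrite eqxx.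
  exists set0, set0; split; try exact: mad0.
    by rewrite -setI_eq0 setI0.
  by rewrite setU0 T0.
have [S0 S0_neq0 S0_densest] := exists_densest e T_neq0.
have [y [orient_y outdeg_y peel_y]] := exists_peelable_orientation e_sym e_irr S0_densest.
have [A [B [AB_T disjAB heavyA sparseB]]] :=
  peel_partition e_sym e_irr k_ge2 peel_y [set: T].
have S0_gt0 : 0 < #|S0| by rewrite card_gt0.
have E0_lt := iffLR (mad_ltP e_sym e_irr _ _) madG S0 (subsetT S0) S0_neq0.
exists A, B; split=> //.
  exact: (mad_lt_heavy e_sym e_irr S0_gt0 E0_lt orient_y outdeg_y disjAB heavyA).
have -> : (2 * k%:R - 2 : R)%R = ((2 * k - 2)%N%:R)%R by rewrite natrB ?natrM //; lia.
exact: mad_lt_sparse.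
Qed.
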